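(* Let $h\in\mathbb R[x_1,\ldots,x_n]$ be homogeneous and hyperbolic in direction $e\in\mathbb R^n$, and let $\mathcal A_e(h)$, $\sigma=(\sigma_1,\ldots,\sigma_n)$ and $\Sigma^2\mathcal A_e(h)$ be as in the context. Then: (i) If $a\in\mathbb R^n$ satisfies $h(a)\neq 0$, then $a\bullet\sigma=a_1\sigma_1+\cdots+a_n\sigma_n$ is invertible in $\mathcal A_e(h)$. (ii) If $a\in\mathring{\Lambda}_e(h)$, then $a\bullet\sigma\in\Sigma^2\mathcal A_e(h)$. (iii) $1$ is an algebraic interior point of $\Sigma^2\mathcal A_e(h)$, i.e. for every hermitian element $b=b^*\in\mathcal A_e(h)$ there is $\varepsilon>0$ with $1+tb\in\Sigma^2\mathcal A_e(h)$ for all $t\in[-\varepsilon,\varepsilon]$.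
   Context: A homogeneous polynomial $h\in\mathbb R[x]=\mathbb R[x_1,\ldots,x_n]$ is hyperbolic in direction $e\in\mathbb R^n$ if $h(e)\neq0$ and for every $a\in\mathbb R^n$ the univariate polynomial $h_{a,e}(t):=h(a-te)$ has only real roots. The hyperbolicity cone is $\Lambda_e(h)=\{a\in\mathbb R^n: h_{a,e}(t)\text{ has only nonnegative roots}\}$, with interior $\mathring\Lambda_e(h)=\{a: h_{a,e}(t)\text{ has only positive roots}\}$. For $a\in\mathbb R^n$ and a tuple $z=(z_1,\dots,z_n)$ write $a\bullet z=a_1z_1+\cdots+a_nz_n$. Let $\mathbb C\langle z\rangle=\mathbb C\langle z_1,\ldots,z_n\rangle$ be the free noncommutative unital algebra with the involution $*$ (conjugate-linear, anti-multiplicative) determined by $z_i^*=z_i$. Let $J_e(h)$ be the two-sided ideal generated by all elements $h_{a,e}(a\bullet z)$, $a\in\mathbb R^n$, together with $1-e\bullet z$. The generalized Clifford algebra is the unital $*$-algebra $\mathcal A_e(h)=\mathbb C\langle z\rangle/J_e(h)$; $\sigma_i$ denotes the class of $z_i$. $\Sigma^2\mathcal A_e(h)$ denotes the convex cone of finite sums $\sum_i a_i^*a_i$ with $a_i\in\mathcal A_e(h)$. *)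

From Stdlib Require List.
From HB Require Import structures.
From mathcomp Require Import all_boot all_order all_algebra.
From mathcomp Require Import mpoly complex.
From mathcomp Require Import reals.

Set Implicit Arguments.
Unset Strict Implicit.
Unset Printing Implicit Defensive.

Import Order.TTheory GRing.Theory Num.Theory.
Local Open Scope ring_scope.

Definition homogeneous (R : realType) (n : nat) (h : {mpoly R[n]}) : Prop :=
  exists d : nat, forall m, m \in msupp h -> mdeg m = d.

(* h_{a,e}(t) := h(a - t e), as a univariate polynomial in t *)
Definition hae (R : realType) (n : nat) (h : {mpoly R[n]}) (a e : 'I_n -> R)
  : {poly R} :=
  (map_mpoly (@polyC R) h).@[fun i => (a i)%:P - (e i)%:P * 'X].

Definition cpoly (R : realType) (p : {poly R}) : {poly R[i]} :=
  map_poly (fun x : R => (x%:C)%C) p.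

Definition only_real_roots (R : realType) (p : {poly R}) : Prop :=
  forall z : R[i], root (cpoly p) z -> Im z = 0.

Definition only_pos_roots (R : realType) (p : {poly R}) : Prop :=
  forall z : R[i], root (cpoly p) z -> Im z = 0 /\ 0 < Re z.

Definition hyperbolic (R : realType) (n : nat) (h : {mpoly R[n]}) (e : 'I_n -> R)
  : Prop :=
  h.@[e] != 0 /\ forall a : 'I_n -> R, only_real_roots (hae h a e).

Definition in_hcone_interior (R : realType) (n : nat) (h : {mpoly R[n]})
  (e a : 'I_n -> R) : Prop :=
  only_pos_roots (hae h a e).

(* The free noncommutative *-algebra C<z_1,...,z_n>, C = R[i].               *)
(* An element is represented by its coefficient function on words            *)
(* (seq 'I_n); the polynomials are those with finitely many nonzero          *)
(* coefficients (equivalently, bounded degree, since n is finite).          *)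

Definition ncpoly (R : realType) (n : nat) := seq 'I_n -> R[i].

Section NC.
Variables (R : realType) (n : nat).
Local Notation C := (R[i]).
Local Notation P := (ncpoly R n).

Definition is_ncpoly (p : P) : Prop :=
  exists N : nat, forall w : seq 'I_n, (N <= size w)%N -> p w = 0.

Definition nc0 : P := fun _ => 0.
Definition nc1 : P := fun w => if w is [::] then 1 else 0.
Definition ncvar (i : 'I_n) : P := fun w => if w == [:: i] then 1 else 0.
Definition ncadd (p q : P) : P := fun w => p w + q w.
Definition ncscale (c : C) (p : P) : P := fun w => c * p w.
Definition ncsub (p q : P) : P := fun w => p w - q w.
Definition ncmul (p q : P) : P :=
  fun w => \sum_(k < (size w).+1) p (take k w) * q (drop k w).
(* the involution: conjugate-linear, anti-multiplicative, z_i^* = z_i *)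
Definition ncstar (p : P) : P := fun w => ((p (rev w))^*)%C.
Definition ncpow (p : P) (k : nat) : P := iter k (ncmul p) nc1.
Definition ncsum (s : seq P) : P := foldr ncadd nc0 s.

Definition ncdot (a : 'I_n -> R) : P :=
  fun w => \sum_(i < n) (a i)%:C%C * ncvar i w.

Definition ncpeval (q : {poly R}) (x : P) : P :=
  fun w => \sum_(k < size q) (q`_k)%:C%C * ncpow x k w.

End NC.

Definition Jgen (R : realType) (n : nat) (h : {mpoly R[n]}) (e : 'I_n -> R)
  (g : ncpoly R n) : Prop :=
  (exists a : 'I_n -> R, g = ncpeval (hae h a e) (ncdot a))
  \/ g = ncsub (@nc1 R n) (ncdot e).

Inductive inJ (R : realType) (n : nat) (h : {mpoly R[n]}) (e : 'I_n -> R)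
  : ncpoly R n -> Prop :=
| inJ_gen g : Jgen h e g -> inJ h e g
| inJ_add p q : inJ h e p -> inJ h e q -> inJ h e (ncadd p q)
| inJ_lmul p q : is_ncpoly p -> inJ h e q -> inJ h e (ncmul p q)
| inJ_rmul p q : inJ h e p -> is_ncpoly q -> inJ h e (ncmul p q).

(* Statements about A_e(h) = C<z>/J_e(h), written on representatives. *)

Definition invertibleA (R : realType) (n : nat) (h : {mpoly R[n]})
  (e : 'I_n -> R) (x : ncpoly R n) : Prop :=
  exists u : ncpoly R n, is_ncpoly u /\
    inJ h e (ncsub (ncmul x u) (@nc1 R n)) /\
    inJ h e (ncsub (ncmul u x) (@nc1 R n)).

Definition in_SOS (R : realType) (n : nat) (h : {mpoly R[n]})
  (e : 'I_n -> R) (x : ncpoly R n) : Prop :=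
  exists us : seq (ncpoly R n), List.Forall (@is_ncpoly R n) us /\
    inJ h e (ncsub x (ncsum [seq ncmul (ncstar u) u | u <- us])).

Definition hermitianA (R : realType) (n : nat) (h : {mpoly R[n]})
  (e : 'I_n -> R) (b : ncpoly R n) : Prop :=
  inJ h e (ncsub (ncstar b) b).

(* Everything is obtained by evaluating univariate real polynomial identities
   at elements of the free algebra, using that [h_{a,e}(a.z)] lies in the ideal
   for every [a].
   (i) The constant term of [h_{a,e}] is [h(a) != 0], so writing
   [h_{a,e}(t) = h(a) + t D(t)] exhibits [- D(a.z) / h(a)] as an inverse.
   (ii) If [p = \prod (t - l)] has only positive roots, then
   [t = sum_k g_k(t)^2 + p(t) Q(t)] for some real polynomials [g_k], [Q]; at the
   hermitian element [y = a.z] the [g_k(y)^2] are hermitian squares and [p(y)]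
   lies in the ideal.
   (iii) Write [x <= y] when [y - x] is a sum of hermitian squares modulo the
   ideal. Since [h_{e_i,e}] is real rooted, the same identity applies to
   [c +- z_i] for [c] exceeding the moduli of all its roots, so [c +- z_i >= 0],
   whence [z_i^2 <= c^2]. The [b] with [b^* b <= N] for some [N] form a
   subalgebra, which thus contains every polynomial, and for hermitian such [b]
   and small [t] we get [2 (1 + t b) = (1 + t b)^* (1 + t b) + (1 - t^2 b^* b)]
   modulo the ideal, which is [>= 0]. *)

From HB Require Import structures.
From mathcomp Require Import all_boot all_order all_algebra.
From mathcomp Require Import mpoly complex.
From mathcomp Require Import reals boolp zify ring lra.

Set Implicit Arguments.
Unset Strict Implicit.
Unset Printing Implicit Defensive.

Import Order.TTheory GRing.Theory Num.Theory.
Local Open Scope ring_scope.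

Section NCAlgebra.
Variables (R : realType) (n : nat).

(* The algebra structure lives on all coefficient functions, finiteness of the
   support being the separate predicate [is_ncpoly]. Scalars are real, so that
   real polynomials can be evaluated with [horner_alg]. *)
Local Notation ncalg := (ncpoly R n).
HB.instance Definition _ := gen_eqMixin ncalg.
HB.instance Definition _ := gen_choiceMixin ncalg.

Definition ncopp (p : ncalg) : ncalg := fun w => - p w.

Lemma ncaddA : associative (@ncadd R n).
Proof. by move=> p q r; apply: funext => w; rewrite /ncadd addrA. Qed.
Lemma ncaddC : commutative (@ncadd R n).
Proof. by move=> p q; apply: funext => w; rewrite /ncadd addrC. Qed.
Lemma ncadd0 : left_id (@nc0 R n) (@ncadd R n).
Proof. by move=> p; apply: funext => w; rewrite /ncadd add0r. Qed.
Lemma ncaddN : left_inverse (@nc0 R n) ncopp (@ncadd R n).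
Proof. by move=> p; apply: funext => w; rewrite /ncadd addNr. Qed.

HB.instance Definition _ := GRing.isZmodule.Build ncalg ncaddA ncaddC ncadd0 ncaddN.

Lemma nc_addE (p q : ncalg) w : (p + q) w = p w + q w. Proof. by []. Qed.
Lemma nc_oppE (p : ncalg) w : (- p) w = - p w. Proof. by []. Qed.
Lemma nc_sumE I (r : seq I) (P : pred I) (F : I -> ncalg) w :
  (\sum_(i <- r | P i) F i) w = \sum_(i <- r | P i) F i w.
Proof. by elim/big_rec2: _ => // i y1 y2 _ <-. Qed.

Definition ncderiv (x : 'I_n) (p : ncalg) : ncalg := fun w => p (x :: w).

Lemma ncmul_nil (p q : ncalg) : ncmul p q [::] = p [::] * q [::].
Proof. by rewrite /ncmul big_ord1. Qed.

Lemma ncmul_cons (p q : ncalg) x w :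
  ncmul p q (x :: w) = p [::] * q (x :: w) + ncmul (ncderiv x p) q w.
Proof. by rewrite /ncmul big_ord_recl. Qed.

Lemma ncmul_scalel c (p q : ncalg) : ncmul (ncscale c p) q = ncscale c (ncmul p q).
Proof.
apply: funext => w; rewrite /ncmul /ncscale mulr_sumr.
by apply: eq_bigr => k _; rewrite mulrA.
Qed.

Lemma ncmul_scaler c (p q : ncalg) : ncmul p (ncscale c q) = ncscale c (ncmul p q).
Proof.
apply: funext => w; rewrite /ncmul /ncscale mulr_sumr.
by apply: eq_bigr => k _; rewrite mulrCA.
Qed.

Lemma ncmulDl (p q r : ncalg) : ncmul (p + q) r = ncmul p r + ncmul q r.
Proof.
apply: funext => w; rewrite /ncmul nc_addE -big_split.
by apply: eq_bigr => k _; rewrite mulrDl.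
Qed.

Lemma ncmulDr (r p q : ncalg) : ncmul r (p + q) = ncmul r p + ncmul r q.
Proof.
apply: funext => w; rewrite /ncmul nc_addE -big_split.
by apply: eq_bigr => k _; rewrite mulrDr.
Qed.

Lemma ncderiv_mul x (p q : ncalg) :
  ncderiv x (ncmul p q) = ncscale (p [::]) (ncderiv x q) + ncmul (ncderiv x p) q.
Proof. by apply: funext => w; rewrite /ncderiv ncmul_cons. Qed.

Lemma ncmulA : associative (@ncmul R n).
Proof.
move=> p q r; apply: funext => w; elim: w p q r => [|x w IH] p q r.
  by rewrite !ncmul_nil mulrA.
rewrite !ncmul_cons !ncmul_nil ncderiv_mul ncmulDl ncmul_scalel nc_addE IH.
by rewrite /ncscale mulrDr !addrA mulrA.
Qed.

Lemma ncmul1 : left_id (@nc1 R n) (@ncmul R n).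
Proof.
move=> p; apply: funext => -[|x w]; first by rewrite ncmul_nil mul1r.
rewrite ncmul_cons mul1r /ncmul big1 ?addr0 // => k _.
by rewrite /ncderiv mul0r.
Qed.

Lemma ncmul1r : right_id (@nc1 R n) (@ncmul R n).
Proof.
move=> p; apply: funext => w; elim: w p => [|x w IH] p.
  by rewrite ncmul_nil mulr1.
by rewrite ncmul_cons IH mulr0 add0r.
Qed.

Lemma nc1_neq0 : (@nc1 R n : ncalg) != 0.
Proof.
by apply/eqP => /(congr1 (fun f : ncalg => f [::])) /eqP; rewrite oner_eq0.
Qed.

HB.instance Definition _ := GRing.Zmodule_isNzRing.Build ncalg
  ncmulA ncmul1 ncmul1r ncmulDl ncmulDr nc1_neq0.

Lemma nc_mulE (p q : ncalg) : p * q = ncmul p q. Proof. by []. Qed.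

Definition ncscaleR (r : R) (p : ncalg) : ncalg := ncscale r%:C%C p.

Lemma ncscaleRA a b (p : ncalg) : ncscaleR a (ncscaleR b p) = ncscaleR (a * b) p.
Proof. by apply: funext => w; rewrite /ncscaleR /ncscale mulrA rmorphM. Qed.
Lemma ncscaleR1 : left_id 1 ncscaleR.
Proof. by move=> p; apply: funext => w; rewrite /ncscaleR /ncscale mul1r. Qed.
Lemma ncscaleRDr : right_distributive ncscaleR +%R.
Proof. by move=> a p q; apply: funext => w; rewrite /ncscaleR /ncscale mulrDr. Qed.
Lemma ncscaleRDl p : {morph ncscaleR^~ p : a b / a + b}.
Proof.
by move=> a b; apply: funext => w; rewrite /ncscaleR /ncscale rmorphD mulrDl.
Qed.

HB.instance Definition _ :=
  GRing.Zmodule_isLmodule.Build R ncalg ncscaleRA ncscaleR1 ncscaleRDr ncscaleRDl.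

Lemma nc_scaleE r (p : ncalg) w : (r *: p) w = r%:C%C * p w. Proof. by []. Qed.

Lemma ncscaleRAl a (p q : ncalg) : a *: (p * q) = (a *: p) * q.
Proof. exact/esym/ncmul_scalel. Qed.

HB.instance Definition _ := GRing.Lmodule_isLalgebra.Build R ncalg ncscaleRAl.

Lemma ncscaleRAr a (p q : ncalg) : a *: (p * q) = p * (a *: q).
Proof. exact/esym/ncmul_scaler. Qed.

HB.instance Definition _ := GRing.Lalgebra_isAlgebra.Build R ncalg ncscaleRAr.

End NCAlgebra.

Section Involution.
Variables (R : realType) (n : nat).
Local Notation ncalg := (ncpoly R n).

Lemma ncstarD (p q : ncalg) : ncstar (p + q) = ncstar p + ncstar q.
Proof. by apply: funext => w; rewrite /ncstar !nc_addE rmorphD. Qed.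
Lemma ncstarN (p : ncalg) : ncstar (- p) = - ncstar p.
Proof. by apply: funext => w; rewrite /ncstar !nc_oppE rmorphN. Qed.
Lemma ncstarB (p q : ncalg) : ncstar (p - q) = ncstar p - ncstar q.
Proof. by rewrite ncstarD ncstarN. Qed.
Lemma ncstar0 : ncstar 0 = 0 :> ncalg.
Proof. by apply: funext => w; rewrite /ncstar conjc0. Qed.
Lemma ncstar_scale c (p : ncalg) : ncstar (ncscale c p) = ncscale c^*%C (ncstar p).
Proof. by apply: funext => w; rewrite /ncstar /ncscale rmorphM. Qed.
Lemma ncstarZ r (p : ncalg) : ncstar (r *: p) = r *: ncstar p.
Proof. by have := ncstar_scale r%:C%C p; rewrite conjc_real. Qed.
Lemma ncstar1 : ncstar 1 = 1 :> ncalg.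
Proof.
apply: funext => -[|x w]; first exact: conjc1.
by rewrite /ncstar rev_cons; case: (rev w) => [|? ?]; rewrite conjc0.
Qed.
Lemma ncstar_sum I (r : seq I) (P : pred I) (F : I -> ncalg) :
  ncstar (\sum_(i <- r | P i) F i) = \sum_(i <- r | P i) ncstar (F i).
Proof. by elim/big_rec2: _ => [|i y1 y2 _ <-]; rewrite ?ncstar0 ?ncstarD. Qed.

Lemma ncstarM (p q : ncalg) : ncstar (p * q) = ncstar q * ncstar p.
Proof.
apply: funext => w; rewrite /ncstar !nc_mulE /ncmul size_rev rmorph_sum.
rewrite (reindex_inj rev_ord_inj); apply: eq_bigr => k _.
have hk : (k <= size w)%N by rewrite -ltnS ltn_ord.
by rewrite rmorphM mulrC /= subSS drop_rev take_rev subKn.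
Qed.

Lemma ncstarX (p : ncalg) k : ncstar (p ^+ k) = ncstar p ^+ k.
Proof.
elim: k => [|k IH]; first by rewrite !expr0 ncstar1.
by rewrite exprS ncstarM IH -exprSr.
Qed.

Lemma ncstar_var (i : 'I_n) : ncstar (ncvar R i) = ncvar R i.
Proof.
apply: funext => w; rewrite /ncstar /ncvar.
rewrite -[[:: i]]/(rev [:: i]) (inj_eq (can_inj (@revK _))).
by case: ifP; rewrite ?conjc1 ?conjc0.
Qed.

Lemma ncstar_parallelogram (x y : ncalg) :
  ncstar (x + y) * (x + y) + ncstar (x - y) * (x - y) =
  (ncstar x * x + ncstar y * y) *+ 2.
Proof.
rewrite ncstarD ncstarB !mulrDl !mulrDr !mulrN !mulNr opprK mulr2n.
by apply: funext => w; rewrite !(nc_addE, nc_oppE); ring.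
Qed.

End Involution.

Section Polynomials.
Variables (R : realType) (n : nat).
Local Notation ncalg := (ncpoly R n).
Local Notation is_ncpoly := (@is_ncpoly R n).

Lemma is_ncpoly0 : is_ncpoly 0. Proof. by exists 0%N. Qed.
Lemma is_ncpoly1 : is_ncpoly 1. Proof. by exists 1%N => -[|x w]. Qed.
Lemma is_ncpolyD (p q : ncalg) : is_ncpoly p -> is_ncpoly q -> is_ncpoly (p + q).
Proof.
move=> [N hN] [M hM]; exists (maxn N M) => w; rewrite geq_max => /andP[hNw hMw].
by rewrite nc_addE hN ?hM ?addr0.
Qed.
Lemma is_ncpolyN (p : ncalg) : is_ncpoly p -> is_ncpoly (- p).
Proof. by move=> [N hN]; exists N => w hw; rewrite nc_oppE hN ?oppr0. Qed.
Lemma is_ncpolyB (p q : ncalg) : is_ncpoly p -> is_ncpoly q -> is_ncpoly (p - q).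
Proof. by move=> hp hq; apply/is_ncpolyD/is_ncpolyN. Qed.
Lemma is_ncpoly_scale c (p : ncalg) : is_ncpoly p -> is_ncpoly (ncscale c p).
Proof. by move=> [N hN]; exists N => w hw; rewrite /ncscale hN ?mulr0. Qed.
Lemma is_ncpolyZ r (p : ncalg) : is_ncpoly p -> is_ncpoly (r *: p).
Proof. exact: is_ncpoly_scale. Qed.
Lemma is_ncpolyM (p q : ncalg) : is_ncpoly p -> is_ncpoly q -> is_ncpoly (p * q).
Proof.
move=> [N hN] [M hM]; exists (N + M)%N => w hw; apply: big1 => k _.
have hk := ltn_ord k; case: (leqP N k) => hNk.
  by rewrite hN ?mul0r // size_take; case: ifP => // _; apply: leq_trans hNk _.
by rewrite hM ?mulr0 // size_drop; lia.
Qed.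
Lemma is_ncpoly_sum I (r : seq I) (P : pred I) (F : I -> ncalg) :
  (forall i, P i -> is_ncpoly (F i)) -> is_ncpoly (\sum_(i <- r | P i) F i).
Proof. by move=> hF; apply: big_ind => //; [exact: is_ncpoly0 | exact: is_ncpolyD]. Qed.
Lemma is_ncpolyX (p : ncalg) k : is_ncpoly p -> is_ncpoly (p ^+ k).
Proof.
move=> hp; elim: k => [|k IH]; first by rewrite expr0; exact: is_ncpoly1.
by rewrite exprS; apply: is_ncpolyM.
Qed.
Lemma is_ncpoly_star (p : ncalg) : is_ncpoly p -> is_ncpoly (ncstar p).
Proof. by move=> [N hN]; exists N => w hw; rewrite /ncstar hN ?conjc0 ?size_rev. Qed.
Lemma is_ncpoly_var (i : 'I_n) : is_ncpoly (ncvar R i).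
Proof. by exists 2%N => -[|x [|y w]] // _; rewrite /ncvar; case: ifP => // /eqP. Qed.

Lemma ncderiv_var (x i : 'I_n) : ncderiv x (ncvar R i) = if x == i then 1 else 0.
Proof.
apply: funext => w; rewrite /ncderiv /ncvar eqseq_cons eq_sym.
by case: eqP => _; case: w.
Qed.

Lemma ncpoly_decomp (p : ncalg) :
  p = ncscale (p [::]) 1 + \sum_(i < n) ncvar R i * ncderiv i p.
Proof.
apply: funext => -[|x w]; rewrite nc_addE nc_sumE /ncscale.
  by rewrite mulr1 big1 ?addr0 // => i _; rewrite nc_mulE ncmul_nil mul0r.
rewrite mulr0 add0r (bigD1 x) //= big1 => [|i ne_ix];
  rewrite nc_mulE ncmul_cons mul0r add0r ncderiv_var -nc_mulE.
  by rewrite eqxx mul1r addr0.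
by rewrite eq_sym (negbTE ne_ix) mul0r.
Qed.

End Polynomials.

Section Ideal.
Variables (R : realType) (n : nat) (h : {mpoly R[n]}) (e : 'I_n -> R).
Local Notation ncalg := (ncpoly R n).
Local Notation J := (@inJ R n h e).

Lemma inJD (x y : ncalg) : J x -> J y -> J (x + y).
Proof. exact: inJ_add. Qed.
Lemma inJMl (a x : ncalg) : is_ncpoly a -> J x -> J (a * x).
Proof. exact: inJ_lmul. Qed.
Lemma inJMr (a x : ncalg) : is_ncpoly a -> J x -> J (x * a).
Proof. by move=> ha hx; apply: inJ_rmul. Qed.
Lemma inJ0 : J 0.
Proof.
have hJ : J (ncsub (@nc1 R n) (ncdot e)) by apply: inJ_gen; right.
by have := inJMl (@is_ncpoly0 R n) hJ; rewrite mul0r.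
Qed.
Lemma inJZ r (x : ncalg) : J x -> J (r *: x).
Proof.
by move=> hx; rewrite -mulr_algl; apply: inJMl => //; apply/is_ncpolyZ/is_ncpoly1.
Qed.

End Ideal.

Section SumsOfSquares.
Variables (R : realType) (n : nat).
Local Notation ncalg := (ncpoly R n).

Definition sos (s : ncalg) := exists us : seq ncalg,
  List.Forall (@is_ncpoly R n) us /\ s = \sum_(u <- us) ncstar u * u.

Lemma sos0 : sos 0. Proof. by exists [::]; rewrite big_nil. Qed.

Lemma sosD s t : sos s -> sos t -> sos (s + t).
Proof.
move=> [us [hu ->]] [vs [hv ->]]; exists (us ++ vs).
by rewrite big_cat; split => //; apply/List.Forall_app.
Qed.

Lemma sos_sqr u : is_ncpoly u -> sos (ncstar u * u).
Proof. by move=> hu; exists [:: u]; rewrite big_seq1; split => //; constructor. Qed.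

Lemma sos_conj a s : is_ncpoly a -> sos s -> sos (ncstar a * s * a).
Proof.
move=> ha [us [hu ->]]; exists [seq u * a | u <- us]; split.
  by elim: hu => //= u us' hu1 _ IH; constructor => //; apply: is_ncpolyM.
rewrite big_map mulr_sumr mulr_suml; apply: eq_bigr => u _.
by rewrite ncstarM !mulrA.
Qed.

Lemma sosZ r s : 0 <= r -> sos s -> sos (r *: s).
Proof.
move=> hr [us [hu ->]]; exists [seq Num.sqrt r *: u | u <- us]; split.
  by elim: hu => //= u us' hu1 _ IH; constructor => //; apply: is_ncpolyZ.
rewrite big_map scaler_sumr; apply: eq_bigr => u _.
by rewrite ncstarZ -scalerAr -scalerAl scalerA -expr2 sqr_sqrtr.
Qed.

Lemma sos1 : sos 1.
Proof. by rewrite -[1]mulr1 -{1}ncstar1; apply/sos_sqr/is_ncpoly1. Qed.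

End SumsOfSquares.

Section ModuloJ.
Variables (R : realType) (n : nat) (h : {mpoly R[n]}) (e : 'I_n -> R).
Local Notation ncalg := (ncpoly R n).
Local Notation J := (@inJ R n h e).
Local Notation in_SOS := (@in_SOS R n h e).

Lemma in_SOSP (x : ncalg) : in_SOS x <-> exists2 s, sos s & J (x - s).
Proof.
have sumE (us : seq ncalg) :
    ncsum [seq ncmul (ncstar u) u | u <- us] = \sum_(u <- us) ncstar u * u.
  by elim: us => [|u us IH]; rewrite ?big_nil ?big_cons //= IH.
split=> [[us [hus hJ]]|[s [us [hus ->]] hJ]]; last by exists us; rewrite sumE.
by exists (\sum_(u <- us) ncstar u * u); [exists us | rewrite -sumE].
Qed.

Lemma in_SOS_sos s : sos s -> in_SOS s.
Proof. by move=> hs; apply/in_SOSP; exists s; rewrite // subrr; apply: inJ0. Qed.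

Lemma in_SOS_congr (x y : ncalg) : J (x - y) -> in_SOS y -> in_SOS x.
Proof.
move=> hxy /in_SOSP [s hs hJ]; apply/in_SOSP; exists s => //.
by have := inJD hxy hJ; rewrite addrA subrK.
Qed.

Lemma in_SOSD (x y : ncalg) : in_SOS x -> in_SOS y -> in_SOS (x + y).
Proof.
move=> /in_SOSP [s hs hJ] /in_SOSP [t ht hK]; apply/in_SOSP; exists (s + t).
  exact: sosD.
by have := inJD hJ hK; rewrite opprD addrACA.
Qed.

Lemma in_SOSZ r (x : ncalg) : 0 <= r -> in_SOS x -> in_SOS (r *: x).
Proof.
move=> hr /in_SOSP [s hs hJ]; apply/in_SOSP; exists (r *: s); first exact: sosZ.
by rewrite -scalerBr; apply: inJZ.
Qed.

Lemma in_SOS_conj (a x : ncalg) :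
  is_ncpoly a -> in_SOS x -> in_SOS (ncstar a * x * a).
Proof.
move=> ha /in_SOSP [s hs hJ]; apply/in_SOSP; exists (ncstar a * s * a).
  exact: sos_conj.
by rewrite -mulrBl -mulrBr; apply/inJMr/inJMl/hJ/is_ncpoly_star.
Qed.

Definition sosle (x y : ncalg) := in_SOS (y - x).

Lemma sosle_trans y x z : sosle x y -> sosle y z -> sosle x z.
Proof. by move=> hxy hyz; have := in_SOSD hyz hxy; rewrite addrA subrK. Qed.

Lemma sosleD x1 y1 x2 y2 : sosle x1 y1 -> sosle x2 y2 -> sosle (x1 + x2) (y1 + y2).
Proof. by move=> h1 h2; rewrite /sosle opprD addrACA; apply: in_SOSD. Qed.

Lemma sosleZ r x y : 0 <= r -> sosle x y -> sosle (r *: x) (r *: y).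
Proof. by move=> hr hxy; rewrite /sosle -scalerBr; apply: in_SOSZ. Qed.

Lemma sosle_conj a x y :
  is_ncpoly a -> sosle x y -> sosle (ncstar a * x * a) (ncstar a * y * a).
Proof. by move=> ha hxy; rewrite /sosle -mulrBl -mulrBr; apply: in_SOS_conj. Qed.

Lemma sosle_addr x u : in_SOS u -> sosle x (x + u).
Proof. by rewrite /sosle addrAC subrr add0r. Qed.

End ModuloJ.

Section HornerAlg.
Variables (R : comNzRingType) (A : algType R).

Lemma horner_algE (x : A) (p : {poly R}) :
  horner_alg x p = \sum_(k < size p) p`_k *: x ^+ k.
Proof.
rewrite /horner_alg /horner_morph (@horner_coef_wide _ (size p)); last exact: size_poly.
by apply: eq_bigr => k _; rewrite coef_map /= mulr_algl.
Qed.

Lemma horner_alg_comp (x : A) (p q : {poly R}) :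
  horner_alg (horner_alg x q) p = horner_alg x (p \Po q).
Proof.
elim/poly_ind: p => [|p c IH]; first by rewrite comp_poly0 !rmorph0.
rewrite comp_polyD comp_polyM comp_polyX comp_polyC !rmorphD !rmorphM /=.
by rewrite IH !horner_algC horner_algX.
Qed.

End HornerAlg.

Section NCEvaluation.
Variables (R : realType) (n : nat).
Local Notation ncalg := (ncpoly R n).

Lemma ncpevalE (p : {poly R}) (x : ncalg) : ncpeval p x = horner_alg x p.
Proof.
have powE k : ncpow x k = x ^+ k.
  by elim: k => [|k IH] //; rewrite exprS /ncpow /= -/(ncpow x k) IH.
apply: funext => w; rewrite horner_algE nc_sumE.
by apply: eq_bigr => k _; rewrite nc_scaleE powE.
Qed.

Lemma is_ncpoly_horner_alg (x : ncalg) p : is_ncpoly x -> is_ncpoly (horner_alg x p).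
Proof.
move=> hx; rewrite horner_algE; apply: is_ncpoly_sum => k _.
exact/is_ncpolyZ/is_ncpolyX.
Qed.

Lemma ncstar_horner_alg (x : ncalg) p :
  ncstar (horner_alg x p) = horner_alg (ncstar x) p.
Proof.
rewrite !horner_algE ncstar_sum; apply: eq_bigr => k _.
by rewrite ncstarZ ncstarX.
Qed.

Lemma ncdotE (a : 'I_n -> R) : ncdot a = \sum_(i < n) a i *: ncvar R i.
Proof. by apply: funext => w; rewrite nc_sumE. Qed.

Lemma ncdot_delta (i : 'I_n) : ncdot (fun j => (j == i)%:R) = ncvar R i.
Proof.
rewrite ncdotE (bigD1 i) //= eqxx scale1r big1 ?addr0 // => j /negbTE ->.
by rewrite scale0r.
Qed.

Lemma is_ncpoly_dot (a : 'I_n -> R) : is_ncpoly (ncdot a).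
Proof.
by rewrite ncdotE; apply: is_ncpoly_sum => i _; apply/is_ncpolyZ/is_ncpoly_var.
Qed.

Lemma ncstar_dot (a : 'I_n -> R) : ncstar (ncdot a) = ncdot a.
Proof.
by rewrite ncdotE ncstar_sum; apply: eq_bigr => i _; rewrite ncstarZ ncstar_var.
Qed.

End NCEvaluation.

Lemma prod_XsubC_comp_affine (R : comNzRingType) (ls : seq R) (c s : R) :
  (\prod_(l <- ls) ('X - (c + s * l)%:P)) \Po (c%:P + s%:P * 'X) =
  (s ^+ size ls)%:P * \prod_(l <- ls) ('X - l%:P).
Proof.
elim: ls => [|l ls IH]; first by rewrite !big_nil expr0 mul1r comp_polyC.
rewrite !big_cons comp_polyM IH comp_polyB comp_polyX comp_polyC exprS.
by rewrite !polyCM polyCD; ring.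
Qed.

Section PositiveRoots.
Variable R : rcfType.

Lemma coef_prod_XaddC_ge0 (ls : seq R) : (forall l, l \in ls -> 0 <= l) ->
  forall i, 0 <= (\prod_(l <- ls) ('X + l%:P))`_i.
Proof.
elim: ls => [|l ls IH] hl i; first by rewrite big_nil coef1 ler0n.
rewrite big_cons coefM; apply: sumr_ge0 => j _; apply: mulr_ge0.
  rewrite coefD coefX coefC addr_ge0 ?ler0n //.
  by case: eqP => // _; rewrite hl ?mem_head.
by apply: IH => l' hl'; rewrite hl // in_cons hl' orbT.
Qed.

Lemma prod_XaddC_comp_opp (ls : seq R) :
  (\prod_(l <- ls) ('X + l%:P)) \Po (- 'X) =
  ((-1) ^+ size ls)%:P * \prod_(l <- ls) ('X - l%:P).
Proof.
elim: ls => [|l ls IH]; first by rewrite !big_nil expr0 mul1r comp_polyC.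
rewrite !big_cons comp_polyM IH comp_polyD comp_polyX comp_polyC /= exprS polyCM.
ring.
Qed.

Lemma coprimep_prod_XsubC (q : {poly R}) (s : seq R) :
  (forall l, l \in s -> ~~ root q l) -> coprimep q (\prod_(l <- s) ('X - l%:P)).
Proof.
elim: s => [|l s IH] hs; first by rewrite big_nil coprimep1.
rewrite big_cons coprimepMr coprimep_XsubC hs ?mem_head //=.
by apply: IH => l' hl'; rewrite hs // in_cons hl' orbT.
Qed.

(* If [E(t) = A(t^2) + t B(t^2)] had [B(l^2) = 0] for a root [l > 0], then
   [E(-l) = E(l)], which is impossible since [E(-l) = 0 < E(l)]. *)
Lemma coprimep_odd_poly_prod_XsubC (ls : seq R) : (forall l, l \in ls -> 0 < l) ->
  coprimep (odd_poly (\prod_(l <- ls) ('X + l%:P)) \Po 'X^2)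
           (\prod_(l <- ls) ('X - l%:P)).
Proof.
move=> hpos; set E := \prod_(l <- ls) ('X + l%:P).
have hE x : E.[x] = (even_poly E).[x ^+ 2] + (odd_poly E).[x ^+ 2] * x.
  by rewrite -{1}(poly_even_odd E) hornerD hornerM !horner_comp hornerX hornerXn.
apply: coprimep_prod_XsubC => l hl; rewrite /root horner_comp hornerXn.
apply/eqP => hB.
have Eneg : E.[- l] = 0.
  have -> : E.[- l] = (E \Po - 'X).[l] by rewrite horner_comp hornerN hornerX.
  have /rootP Pl : root (\prod_(l <- ls) ('X - l%:P)) l by rewrite root_prod_XsubC.
  by rewrite prod_XaddC_comp_opp hornerCM Pl mulr0.
have Epos : 0 < E.[l].
  rewrite /E horner_prod big_seq; apply: prodr_gt0 => j hj.
  by rewrite hornerD hornerX hornerC addr_gt0 ?hpos.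
by move: Epos; rewrite -Eneg !hE sqrrN hB !mul0r !addr0 ltxx.
Qed.

Lemma comp_sqrX_sos (p : {poly R}) : (forall k, 0 <= p`_k) ->
  p \Po 'X^2 = \sum_(k < size p) (Num.sqrt p`_k *: 'X^k) ^+ 2.
Proof.
move=> hp; rewrite comp_polyE; apply: eq_bigr => k _.
by rewrite exprZn sqr_sqrtr // -exprM mulnC exprM.
Qed.

(* Write [E := \prod ('X + l) = A('X^2) + B('X^2) 'X]; then
   [\prod ('X - l) = +-(A('X^2) - B('X^2) 'X)], so modulo [\prod ('X - l)]
   we have [B('X^2) 'X = A('X^2)], and with a Bezout inverse [u] of [B('X^2)],
   ['X = u^2 B('X^2)^2 'X = u^2 (A B)('X^2)], a sum of squares since [A B]
   has nonnegative coefficients. *)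
Lemma X_sos_mod_prod_XsubC (ls : seq R) : (forall l, l \in ls -> 0 < l) ->
  exists (gs : seq {poly R}) (Q : {poly R}),
    'X = \sum_(g <- gs) g ^+ 2 + (\prod_(l <- ls) ('X - l%:P)) * Q.
Proof.
move=> hpos; set P := \prod_(l <- ls) ('X - l%:P).
set E := \prod_(l <- ls) ('X + l%:P).
set A := even_poly E; set B := odd_poly E.
set A2 := A \Po 'X^2; set B2 := B \Po 'X^2; set sg := (-1) ^+ size ls : R.
have hA2 : A2 = sg%:P * P + B2 * 'X.
  have <- : E \Po (- 'X) = sg%:P * P by apply: prod_XaddC_comp_opp.
  rewrite -{1}(poly_even_odd E) comp_polyD comp_polyM comp_polyX -!comp_polyA.
  by rewrite comp_Xn_poly sqrrN -/A2 -/B2 mulrN subrK.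
have [[u v] /= huv] := Bezout_eq1_coprimepP _ _ (coprimep_odd_poly_prod_XsubC hpos).
have hE k : 0 <= E`_k by apply: coef_prod_XaddC_ge0 => l /hpos /ltW.
have hBA k : 0 <= (B * A)`_k.
  by rewrite coefM sumr_ge0 // => j _; rewrite coef_odd_poly coef_even_poly mulr_ge0.
exists [seq u * (Num.sqrt (B * A)`_k *: 'X^k) | k : 'I_(size (B * A))].
exists ('X * v * (2%:R * u * B2 + v * P) - sg%:P * u ^+ 2 * B2).
have -> : \sum_(g <- [seq u * (Num.sqrt (B * A)`_k *: 'X^k) | k : 'I_(size (B * A))])
    g ^+ 2 = u ^+ 2 * (B2 * A2).
  rewrite big_map big_enum /= /B2 /A2 -comp_polyM (comp_sqrX_sos hBA) mulr_sumr.
  by apply: eq_bigr => k _; rewrite exprMn.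
have hX : 'X = 'X * (u * B2 + v * P) ^+ 2 by rewrite huv expr1n mulr1.
by rewrite hA2 {1}hX; ring.
Qed.

End PositiveRoots.

Section RealRooted.
Variable R : realType.

Lemma only_real_roots_neq0 (q : {poly R}) : only_real_roots q -> q != 0.
Proof.
move=> hq; apply/eqP => q0; have := hq 'i%C.
rewrite q0 /cpoly map_poly0 root0 -complexIm => /(_ isT) /eqP.
by rewrite eq_complex /= oner_eq0.
Qed.

Lemma real_rooted_factor (q : {poly R}) : only_real_roots q ->
  exists ls : seq R, q = lead_coef q *: \prod_(l <- ls) ('X - l%:P) /\
    forall l, l \in ls -> root (cpoly q) l%:C%C.
Proof.
move=> hq; have [rs hrs] := closed_field_poly_normal (cpoly q).
have hroot z : z \in rs -> root (cpoly q) z.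
  move=> hz; rewrite hrs rootZ ?root_prod_XsubC //.
  by rewrite lead_coef_eq0 map_poly_eq0 only_real_roots_neq0.
have hre z : z \in rs -> z = (complex.Re z)%:C%C.
  by move=> /hroot /hq; rewrite -complexIm; case: z => a b /= [->].
exists [seq complex.Re z | z <- rs]; split; last first.
  by move=> l /mapP [z hz ->]; rewrite -hre ?hroot.
apply: (@map_poly_inj _ _ (real_complex R)).
rewrite -[map_poly _ q]/(cpoly q) {1}hrs map_polyZ rmorph_prod lead_coef_map big_map.
by congr (_ *: _); apply: eq_big_seq => z hz; rewrite /= map_polyXsubC /= -hre.
Qed.

Lemma hae_horner0 n (h : {mpoly R[n]}) (a e : 'I_n -> R) : (hae h a e).[0] = h.@[a].
Proof.
rewrite /hae mevalE (perm_big _ (msupp_map_mpoly _ (@polyC_inj R))) horner_sum.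
rewrite mevalE; apply: eq_bigr => m _.
rewrite mcoeff_map_mpoly hornerM hornerC horner_prod; congr (_ * _).
apply: eq_bigr => i _; rewrite horner_exp; congr (_ ^+ _).
by rewrite hornerD hornerN hornerCM hornerX mulr0 subr0 hornerC.
Qed.

End RealRooted.

Section QuotientAlgebra.
Variables (R : realType) (n : nat) (h : {mpoly R[n]}) (e : 'I_n -> R).
Local Notation ncalg := (ncpoly R n).
Local Notation J := (@inJ R n h e).
Local Notation in_SOS := (@in_SOS R n h e).

Lemma inJ_hae (a : 'I_n -> R) : J (horner_alg (ncdot a) (hae h a e)).
Proof. by rewrite -ncpevalE; apply: inJ_gen; left; exists a. Qed.

Lemma inJ_real_rooted (y : ncalg) (q : {poly R}) :
  only_real_roots q -> J (horner_alg y q) ->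
  exists ls : seq R, J (horner_alg y (\prod_(l <- ls) ('X - l%:P))) /\
    forall l, l \in ls -> root (cpoly q) l%:C%C.
Proof.
move=> hq hJ; have [ls [hf hroots]] := real_rooted_factor hq.
exists ls; split => //; have := inJZ (lead_coef q)^-1 hJ.
rewrite [X in horner_alg _ X]hf linearZ /= mulr_algl scalerA mulVf ?scale1r //.
by rewrite lead_coef_eq0 only_real_roots_neq0.
Qed.

Lemma in_SOS_of_pos_roots (y : ncalg) (ls : seq R) :
  (forall l, l \in ls -> 0 < l) -> is_ncpoly y -> ncstar y = y ->
  J (horner_alg y (\prod_(l <- ls) ('X - l%:P))) -> in_SOS y.
Proof.
move=> hpos hy sty hJ; have [gs [Q hX]] := X_sos_mod_prod_XsubC hpos.
have hsos : sos (\sum_(g <- gs) ncstar (horner_alg y g) * horner_alg y g).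
  apply: big_ind => [|s t|g _]; [exact: sos0 | exact: sosD |].
  exact/sos_sqr/is_ncpoly_horner_alg.
apply/in_SOSP; exists (\sum_(g <- gs) ncstar (horner_alg y g) * horner_alg y g) => //.
rewrite -{1}(horner_algX y) {1}hX rmorphD rmorph_sum rmorphM /=.
have -> : \sum_(g <- gs) horner_alg y (g ^+ 2) =
          \sum_(g <- gs) ncstar (horner_alg y g) * horner_alg y g.
  by apply: eq_bigr => g _; rewrite rmorphXn ncstar_horner_alg sty expr2.
by rewrite addrAC subrr add0r; apply: inJMr => //; apply: is_ncpoly_horner_alg.
Qed.

Lemma invertibleA_dot (a : 'I_n -> R) : h.@[a] != 0 -> invertibleA h e (ncdot a).
Proof.
move=> ha; set q := hae h a e; set x := ncdot a; set q0 := q`_0.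
set D := horner_alg x (drop_poly 1 q).
have hq0 : q0 != 0 by rewrite /q0 -horner_coef0 hae_horner0.
have hq : q = q0%:P + drop_poly 1 q * 'X.
  rewrite -{1}(poly_take_drop 1 q) expr1; congr (_ + _).
  by apply/polyP => i; rewrite coef_take_poly coefC; case: i.
have hDx : D * x = horner_alg x q - q0%:A.
  by rewrite hq rmorphD rmorphM /= horner_algC horner_algX -/D addrAC subrr add0r.
have hxD : x * D = D * x.
  by rewrite -{1}(horner_algX x) -rmorphM mulrC rmorphM /= horner_algX.
have hJ : J ((- q0^-1) *: horner_alg x q) by apply/inJZ/inJ_hae.
have inv_eq : ((- q0^-1) *: D) * x - 1 = (- q0^-1) *: horner_alg x q.
  rewrite -scalerAl hDx scalerBr scalerA mulNr mulVf // scaleN1r.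
  by rewrite opprK addrK.
exists ((- q0^-1) *: D); split.
  exact/is_ncpolyZ/is_ncpoly_horner_alg/is_ncpoly_dot.
split; last by rewrite -[ncsub _ _]/(_ * x - 1) inv_eq.
by rewrite -[ncsub _ _]/(x * _ - 1) -scalerAr hxD scalerAl inv_eq.
Qed.

Lemma in_SOS_dot (a : 'I_n -> R) : in_hcone_interior h e a -> in_SOS (ncdot a).
Proof.
move=> hpos; have hreal : only_real_roots (hae h a e) by move=> z /hpos [].
have [ls [hJ hroots]] := inJ_real_rooted hreal (inJ_hae a).
apply: (in_SOS_of_pos_roots _ (is_ncpoly_dot a) (ncstar_dot a) hJ).
by move=> l /hroots /hpos [_]; rewrite -complexRe ltcR.
Qed.

End QuotientAlgebra.

Section BoundedElements.
Variables (R : realType) (n : nat) (h : {mpoly R[n]}) (e : 'I_n -> R).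
Local Notation ncalg := (ncpoly R n).
Local Notation J := (@inJ R n h e).
Local Notation in_SOS := (@in_SOS R n h e).
Local Notation sosle := (@sosle R n h e).

Lemma in_SOS_shift (y : ncalg) (q : {poly R}) :
  is_ncpoly y -> ncstar y = y -> only_real_roots q -> J (horner_alg y q) ->
  exists2 c : R, 0 < c & forall s : R, `|s| <= 1 -> in_SOS (c%:A + s *: y).
Proof.
move=> hy sty hq hJ; have [ls [hJP _]] := inJ_real_rooted hq hJ.
set c := 1 + \sum_(l <- ls) `|l|.
have hc : 0 < c by rewrite ltr_pwDl ?sumr_ge0.
exists c => // s hs.
have -> : c%:A + s *: y = horner_alg y (c%:P + s%:P * 'X).
  by rewrite rmorphD rmorphM /= !horner_algC horner_algX mulr_algl.
apply: (@in_SOS_of_pos_roots _ _ h e _ [seq c + s * l | l <- ls]).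
- move=> _ /mapP [l hl ->].
  have : `|s * l| <= \sum_(l <- ls) `|l|.
    rewrite (big_rem l hl) /= normrM (le_trans (ler_piMl _ hs)) ?lerDl ?sumr_ge0 //.
  by move/ler_normlP => [? _]; rewrite /c; lra.
- exact: is_ncpoly_horner_alg.
- by rewrite ncstar_horner_alg sty.
- rewrite horner_alg_comp big_map prod_XsubC_comp_affine rmorphM /= horner_algC.
  by rewrite mulr_algl; apply: inJZ.
Qed.

(* [2c (c^2 - y^2) = (c + y)(c - y)(c + y) + (c - y)(c + y)(c - y)] *)
Lemma sosle_sqr_of_interval (y : ncalg) (c : R) :
  is_ncpoly y -> ncstar y = y -> 0 < c ->
  in_SOS (c%:A + y) -> in_SOS (c%:A - y) -> sosle (ncstar y * y) (c ^+ 2)%:A.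
Proof.
move=> hy sty hc hp hm.
have fp : c%:A + y = horner_alg y (c%:P + 'X).
  by rewrite rmorphD /= horner_algC horner_algX.
have fm : c%:A - y = horner_alg y (c%:P - 'X).
  by rewrite rmorphB /= horner_algC horner_algX.
have key : (2 * c) *: ((c ^+ 2)%:A - ncstar y * y) =
    ncstar (c%:A + y) * (c%:A - y) * (c%:A + y) +
    ncstar (c%:A - y) * (c%:A + y) * (c%:A - y).
  rewrite fp fm !ncstar_horner_alg sty -!rmorphM -rmorphD -(horner_algC y).
  have -> : y * y = horner_alg y ('X * 'X) by rewrite rmorphM /= horner_algX.
  rewrite -rmorphB -mulr_algl -(horner_algC y) -rmorphM; congr horner_alg.
  ring.
have c2 : 0 < 2 * c by rewrite mulr_gt0 ?ltr0n.
rewrite /sosle -[X in in_SOS X](scalerK (lt0r_neq0 c2)) key.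
apply: in_SOSZ; first by rewrite invr_ge0 ltW.
apply: in_SOSD; apply: in_SOS_conj => //.
  by rewrite fp; apply: is_ncpoly_horner_alg.
by rewrite fm; apply: is_ncpoly_horner_alg.
Qed.

Definition ncbounded (x : ncalg) :=
  is_ncpoly x /\ exists2 N : R, 0 <= N & sosle (ncstar x * x) N%:A.

Lemma ncbounded_const (c : R[i]) : ncbounded (ncscale c 1).
Proof.
split; first exact/is_ncpoly_scale/is_ncpoly1.
exists (complex.Re c ^+ 2 + complex.Im c ^+ 2); first by rewrite addr_ge0 ?sqr_ge0.
suff -> : ncstar (ncscale c 1) * ncscale c 1 =
    (complex.Re c ^+ 2 + complex.Im c ^+ 2)%:A :> ncalg.
  by rewrite /sosle subrr; apply/in_SOS_sos/sos0.
rewrite ncstar_scale ncstar1 nc_mulE ncmul_scalel ncmul_scaler ncmul1.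
apply: funext => w; rewrite /ncscale mulrA; congr (_ * _).
by case: c => a b; apply/eqP; rewrite eq_complex /=; apply/andP; split; apply/eqP; ring.
Qed.

Lemma ncboundedD x y : ncbounded x -> ncbounded y -> ncbounded (x + y).
Proof.
move=> [hx [N1 N10 hN1]] [hy [N2 N20 hN2]]; split; first exact: is_ncpolyD.
exists (2 * (N1 + N2)); first by rewrite mulr_ge0 ?addr_ge0.
have hsq := in_SOS_sos h e (sos_sqr (is_ncpolyB hx hy)).
apply: sosle_trans (sosle_addr _ hsq) _.
rewrite ncstar_parallelogram -scalerA [(N1 + N2)%:A]scalerDl -(scaler_nat 2).
by apply: sosleZ; [rewrite ler0n | apply: sosleD].
Qed.

Lemma ncboundedM x y : ncbounded x -> ncbounded y -> ncbounded (x * y).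
Proof.
move=> [hx [N1 N10 hN1]] [hy [N2 N20 hN2]]; split; first exact: is_ncpolyM.
exists (N1 * N2); first exact: mulr_ge0.
rewrite ncstarM -mulrA [_ * (x * y)]mulrA mulrA.
apply: (sosle_trans (sosle_conj hy hN1)).
by rewrite mulr_algr -scalerAl -scalerA; apply: sosleZ.
Qed.

Lemma ncbounded_sum I (r : seq I) (P : pred I) (F : I -> ncalg) :
  (forall i, P i -> ncbounded (F i)) -> ncbounded (\sum_(i <- r | P i) F i).
Proof.
move=> hF; apply: big_ind => //; last exact: ncboundedD.
by rewrite -[0](scale0r (1 : ncalg)); apply: ncbounded_const.
Qed.

Lemma in_SOS_one_addZ (b : ncalg) : ncbounded b -> hermitianA h e b ->
  exists2 eps : R, 0 < eps & forall t : R, - eps <= t <= eps -> in_SOS (1 + t *: b).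
Proof.
move=> [hb [N N0 hN]] herm; exists (1 + N)^-1 => [|t /andP [ht1 ht2]].
  by rewrite invr_gt0; lra.
have htN : t ^+ 2 * N <= 1.
  have h1N : (1 + N)^-1 * (1 + N) = 1 by rewrite mulVf //; lra.
  have : 0 < (1 + N)^-1 by rewrite invr_gt0; lra.
  nra.
set u := 1 + t *: b.
have hu : is_ncpoly u by apply/is_ncpolyD/is_ncpolyZ/hb/is_ncpoly1.
have hsq : sosle (t ^+ 2 *: (ncstar b * b)) 1.
  apply: sosle_trans (sosleZ (sqr_ge0 t) hN) _.
  rewrite /sosle scalerA -{1}(scale1r 1) -scalerBl.
  by apply: in_SOSZ; [lra | apply/in_SOS_sos/sos1].
have hu2 : in_SOS (2 *: u).
  apply: (@in_SOS_congr _ _ _ _ _ (ncstar u * u + (1 - t ^+ 2 *: (ncstar b * b)))).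
    have -> : 2 *: u - (ncstar u * u + (1 - t ^+ 2 *: (ncstar b * b))) =
              (- t) *: (ncstar b - b).
      rewrite ncstarD ncstar1 ncstarZ !mulrDl !mulrDr !mul1r mulr1.
      rewrite -!scalerAl -!scalerAr; apply: funext => w.
      by rewrite /u !(nc_addE, nc_oppE, nc_scaleE); ring.
    exact: inJZ herm.
  by apply: in_SOSD; [apply/in_SOS_sos/sos_sqr | exact: hsq].
rewrite -[u](scalerK (lt0r_neq0 (ltr0n _ 2))); apply: in_SOSZ hu2.
by rewrite invr_ge0 ler0n.
Qed.

End BoundedElements.

Section Hyperbolic.
Variables (R : realType) (n : nat) (h : {mpoly R[n]}) (e : 'I_n -> R).
Hypothesis hyp : hyperbolic h e.
Local Notation ncalg := (ncpoly R n).
Local Notation ncbounded := (@ncbounded R n h e).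

Lemma ncbounded_var (i : 'I_n) : ncbounded (ncvar R i).
Proof.
split; first exact: is_ncpoly_var.
have [_ /(_ (fun j => (j == i)%:R)) hreal] := hyp.
have := inJ_hae h e (fun j => (j == i)%:R); rewrite ncdot_delta => hJ.
have [c c0 hc] := in_SOS_shift (is_ncpoly_var R i) (ncstar_var R i) hreal hJ.
exists (c ^+ 2); first exact: sqr_ge0.
apply: sosle_sqr_of_interval (is_ncpoly_var R i) (ncstar_var R i) c0 _ _.
  by rewrite -[ncvar R i]scale1r; apply: hc; rewrite normr1.
by rewrite -scaleN1r; apply: hc; rewrite normrN normr1.
Qed.

Lemma ncbounded_ncpoly (p : ncalg) : is_ncpoly p -> ncbounded p.
Proof.
move=> [N]; elim: N p => [|N IH] p hp.
  have -> : p = 0 by apply: funext => w; apply: hp.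
  by rewrite -[0](scale0r (1 : ncalg)); apply: ncbounded_const.
rewrite (ncpoly_decomp p); apply: ncboundedD; first exact: ncbounded_const.
apply: ncbounded_sum => i _; apply: ncboundedM; first exact: ncbounded_var.
by apply: IH => w hw; apply: hp.
Qed.

End Hyperbolic.

Theorem lemma2p2 (R : realType) (n : nat) (h : {mpoly R[n]}) (e : 'I_n -> R) :
  homogeneous h -> hyperbolic h e ->
  (forall a : 'I_n -> R, h.@[a] != 0 -> invertibleA h e (ncdot a)) /\
  (forall a : 'I_n -> R, in_hcone_interior h e a -> in_SOS h e (ncdot a)) /\
  (forall b : ncpoly R n, is_ncpoly b -> hermitianA h e b ->
     exists eps : R, 0 < eps /\
       forall t : R, - eps <= t <= eps ->
         in_SOS h e (ncadd (@nc1 R n) (ncscale (t%:C)%C b))).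
Proof.
move=> _ hyp; split; first exact: invertibleA_dot.
split; first exact: in_SOS_dot.
move=> b hb herm.
have [eps eps0 heps] := in_SOS_one_addZ (ncbounded_ncpoly hyp hb) herm.
by exists eps; split.
Qed.
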